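(* Let $(W,S)$ be a finite Coxeter system, let $J\subseteq S$, and let $W_J$ be the standard parabolic subgroup generated by $J$, with Poincaré polynomial $P_{W_J}(q)=\sum_{x\in W_J}q^{\ell(x)}$; let $P_W(q)=\sum_{w\in W}q^{\ell(w)}$. For $w\in W$ let $g_w(q)=\sum_{\chi\in\operatorname{Irr}(W)}\chi(w)d_\chi(q)$, and for $x\in W_J$ let $g_{W_J,x}(q)=\sum_{\varphi\in\operatorname{Irr}(W_J)}\varphi(x)d_\varphi(q)$, where $d_\chi$ and $d_\varphi$ are the generic degrees of $W$ and of $W_J$ respectively. If $w\in W$ is conjugate in $W$ to $x\in W_J$, then $$g_w(q)=\frac{P_W(q)}{P_{W_J}(q)}\,g_{W_J,x}(q).$$
   Context: For a finite Coxeter group $W$ with set of distinguished generators $S$, length function $\ell(\cdot)$, identity $e$, and set of irreducible complex characters $\operatorname{Irr}(W)$: let $K\subseteq\mathbb{C}$ be a splitting field for $W$, $q$ an indeterminate, and $\mathcal{H}$ the Hecke algebra of $W$ over $K(\sqrt q)$ with basis $T_w$ ($w\in W$) and relations $T_s^2=qT_e+(q-1)T_s$ for $s\in S$, and $T_xT_y=T_{xy}$ whenever $\ell(x)+\ell(y)=\ell(xy)$. $\mathcal{H}$ is split semisimple; each irreducible character $\tilde\chi$ of $\mathcal{H}$ satisfies $\tilde\chi(T_w)\in K[\sqrt q]$, and specializing $\sqrt q\mapsto 1$ in $\tilde\chi(T_w)$ gives $\chi(w)$ for a unique $\chi\in\operatorname{Irr}(W)$, giving a bijection $\chi\leftrightarrow\tilde\chi$.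 The generic degrees $d_\chi(q)$, $\chi\in\operatorname{Irr}(W)$, are the unique elements satisfying $\sum_{\chi\in\operatorname{Irr}(W)}\tilde\chi(T_w)d_\chi(q)=P(q)$ if $w=e$ and $=0$ if $w\neq e$, where $P(q)=\sum_{w\in W}q^{\ell(w)}$. The generic degrees of $W_J$ are defined in the same way for the Coxeter system $(W_J,J)$. *)

From HB Require Import structures.
From mathcomp Require Import all_boot all_order all_algebra all_fingroup all_solvable all_field all_character.
From mathcomp Require Import fraction.

Set Implicit Arguments. Unset Strict Implicit. Unset Printing Implicit Defensive.
Import Order.TTheory GRing.Theory Num.Theory.
Local Open Scope ring_scope.

(* The field K(sqrt q), with K taken to be algC and v := sqrt q the indeterminate 'X. *)
Definition HF : fieldType := {fraction {poly algC}}.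
Definition cstF (c : algC) : HF := tofrac (c%:P).
Definition qF : HF := tofrac ('X ^+ 2 : {poly algC}).

Section Coxeter.
Variable gT : finGroupType.

(* (W,S) is a Coxeter system: W = <<S>>, elements of S are involutions, and W has the
   Coxeter presentation < S | (st)^{m(s,t)} = 1 > with m(s,t) = order of st
   (universal property: every assignment of S into a monoid satisfying the relations
   extends to a homomorphism on W). *)
Definition coxeter_system (W : {group gT}) (S : {set gT}) : Prop :=
  [/\ W :=: <<S>>%g, (forall s, s \in S -> #[s]%g = 2%N) &
   forall (H : Type) (mul : H -> H -> H) (one : H),
     associative mul -> left_id one mul -> right_id one mul ->
     forall f : gT -> H,
       (forall s t, s \in S -> t \in S ->
          iter #[(s * t)%g]%g (mul (mul (f s) (f t))) one = one) ->
       exists phi : gT -> H,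
         (forall s, s \in S -> phi s = f s) /\
         {in W &, forall x y, phi (x * y)%g = mul (phi x) (phi y)}].

Definition word_of (S : {set gT}) (w : gT) (n : nat) : bool :=
  [exists t : n.-tuple gT, all (fun s => s \in S) t && ((\prod_(s <- t) s)%g == w)].

(* length function: the least n with a word of length n in S representing w
   (a shortest word has length < #|gT|) *)
Definition coxeter_length (S : {set gT}) (w : gT) : nat :=
  find (word_of S w) (iota 0 #|gT|).

Definition poincare (W : {group gT}) (S : {set gT}) : HF :=
  \sum_(w in W) qF ^+ coxeter_length S w.

(* a matrix representation of the Hecke algebra H(W,S) over K(sqrt q), given on the basis T_w *)
Definition hecke_rep (W : {group gT}) (S : {set gT}) n (rho : gT -> 'M[HF]_n) : Prop :=
  [/\ rho 1%g = 1%:M,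
      (forall s, s \in S -> rho s *m rho s = qF *: 1%:M + (qF - 1) *: rho s) &
      {in W &, forall x y, (coxeter_length S x + coxeter_length S y)%N
                           = coxeter_length S (x * y)%g ->
                           rho (x * y)%g = rho x *m rho y}].

Definition hecke_irr (W : {group gT}) (S : {set gT}) n (rho : gT -> 'M[HF]_n) : Prop :=
  [/\ hecke_rep W S rho, (0 < n)%N &
      forall U : 'M[HF]_n, {in W, forall w, (U *m rho w <= U)%MS} ->
                           (U == (0 : 'M[HF]_n))%MS || row_full U].

(* the character of rho (the irreducible character tilde chi) corresponds to chi:
   tilde chi(T_w) lies in K[sqrt q] and specializes to chi(w) at sqrt q = 1 *)
Definition hecke_affords (W : {group gT}) n (rho : gT -> 'M[HF]_n) (chi : 'CF(W)) : Prop :=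
  forall w, w \in W -> exists p : {poly algC}, \tr (rho w) = tofrac p /\ p.[1] = chi w.

Definition is_generic_degrees (W : {group gT}) (S : {set gT})
    (rk : Iirr W -> nat) (rho : forall i : Iirr W, gT -> 'M[HF]_(rk i))
    (d : Iirr W -> HF) : Prop :=
  forall w, w \in W ->
    \sum_(i : Iirr W) \tr (rho i w) * d i = if w == 1%g then poincare W S else 0.

Definition gpoly (W : {group gT}) (d : Iirr W -> HF) (w : gT) : HF :=
  \sum_(i : Iirr W) cstF ('chi[W]_i w) * d i.

End Coxeter.

Arguments hecke_affords [gT] W [n] rho chi.
Arguments is_generic_degrees [gT] W S [rk] rho d.
Arguments gpoly [gT] W d w.

(* Restricting an irreducible representation rho_chi of the Hecke algebra of (W, S) to the
   parabolic subalgebra of (W_J, J) gives a Hecke representation of (W_J, J), since the length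
   function of W restricts to that of W_J. Schur's lemma, together with the orthogonality
   relations encoded by the generic degrees of W_J, shows that its trace is a sum, with
   multiplicities m(chi, phi) in N, of the traces of the irreducible rho_phi of W_J; at
   sqrt q = 1 this reads chi|W_J = sum_phi m(chi, phi) phi. Feeding the decomposition into the
   defining relations of the generic degrees of W, and using that the traces of the rho_phi are
   linearly independent (they specialize to the invertible character table of W_J), gives
   sum_chi m(chi, phi) d_chi = P_W / P_W_J * d_phi. Hence for x in W_J
   g_x = sum_phi phi(x) sum_chi m(chi, phi) d_chi = P_W / P_W_J * g_(W_J, x),
   and g is a class function. *)

From HB Require Import structures.
From mathcomp Require Import all_boot all_order all_algebra all_fingroup all_solvable all_field all_character.
From mathcomp Require Import fraction zify.
From Stdlib Require Import FunctionalExtensionality Classical.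
Import Order.TTheory GRing.Theory Num.Theory.

Set Implicit Arguments.
Unset Strict Implicit.
Unset Printing Implicit Defensive.

Local Open Scope ring_scope.

(** * Words and length in a Coxeter system *)

Section Words.
Variable gT : finGroupType.
Implicit Types (S : {set gT}) (x y a : gT) (s : seq gT).
Local Open Scope group_scope.

Definition word_prod s : gT := \prod_(a <- s) a.

Definition word_over S s : bool := all (fun a => a \in S) s.

Lemma word_prod_nil : word_prod [::] = 1.
Proof. exact: big_nil. Qed.

Lemma word_prod_cons a s : word_prod (a :: s) = a * word_prod s.
Proof. exact: big_cons. Qed.

Lemma word_prod_cat s1 s2 : word_prod (s1 ++ s2) = word_prod s1 * word_prod s2.
Proof. exact: big_cat. Qed.

Lemma word_prod_rcons s a : word_prod (rcons s a) = word_prod s * a.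
Proof. by rewrite -cats1 word_prod_cat word_prod_cons word_prod_nil mulg1. Qed.

Lemma word_prod_gen S s : word_over S s -> word_prod s \in <<S>>.
Proof.
elim: s => [|a s IHs] /=; first by rewrite word_prod_nil group1.
by case/andP=> Sa Ss; rewrite word_prod_cons groupM ?IHs // mem_gen.
Qed.

Lemma word_ofP S x n :
  reflect (exists s, [/\ size s = n, word_over S s & word_prod s = x])
          (word_of S x n).
Proof.
apply: (iffP existsP) => [[t /andP[St /eqP <-]] | [s [<- Ss <-]]].
  by exists (val t); rewrite size_tuple.
by exists (in_tuple s); apply/andP; split; last exact: eqxx.
Qed.

(* Two of the #|gT| + 1 prefix products coincide; cutting out the factor between them
   shortens the word. *)
Lemma exists_short_word S s : word_over S s ->
  exists s', [/\ (size s' < #|gT|)%N, word_over S s' & word_prod s' = word_prod s].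
Proof.
have [n] := ubnP (size s); elim: n s => // n IHn s lt_s_n Ss.
have [lt_s_gT | ge_s_gT] := ltnP (size s) #|gT|; first by exists s.
pose pre := [seq word_prod (take i s) | i <- iota 0 (size s).+1].
have /(uniqPn 1)[i [j [lt_ij]]] : ~~ uniq pre.
  apply/negP=> /card_uniqP; rewrite size_map size_iota => card_pre.
  by have := max_card (mem pre); rewrite card_pre ltnNge ge_s_gT.
rewrite size_map size_iota => lt_j_s.
have lt_i_s : (i < size s)%N := leq_trans lt_ij lt_j_s.
have lt_i_s1 : (i < (size s).+1)%N := ltnW lt_i_s.
rewrite !(nth_map 0%N) ?size_iota // !nth_iota // !add0n => eq_pre.
have Ss' : word_over S (take i s ++ drop j s).
  by apply/allP=> a; rewrite mem_cat => /orP[/mem_take | /mem_drop]; apply: (allP Ss).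
have [|s' [? ? eq_s']] := IHn _ _ Ss'.
  by rewrite size_cat size_take lt_i_s size_drop; lia.
by exists s'; split; rewrite // eq_s' word_prod_cat eq_pre -word_prod_cat cat_take_drop.
Qed.

Local Notation ell S := (coxeter_length S).

Lemma coxeter_length_le S x s : word_over S s -> word_prod s = x -> (ell S x <= size s)%N.
Proof.
move=> Ss Px; have [lt_s_gT | ge_s_gT] := ltnP (size s) #|gT|; last first.
  by apply: leq_trans (find_size _ _) _; rewrite size_iota.
rewrite leqNgt; apply/negP=> /(before_find 0%N); rewrite nth_iota // add0n.
by move/negbT/negP; apply; apply/word_ofP; exists s.
Qed.

Lemma exists_reduced_word S x : x \in <<S>> ->
  exists s, [/\ size s = ell S x, word_over S s & word_prod s = x].
Proof.
case/gen_prodgP=> n [c Sc ->].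
have [|s [lt_s_gT Ss Ps]] := @exists_short_word S [seq c i | i <- index_enum 'I_n].
  by apply/allP=> _ /mapP[i _ ->].
have has_word : has (word_of S (\prod_i c i)) (iota 0 #|gT|).
  apply/hasP; exists (size s); first by rewrite mem_iota.
  by apply/word_ofP; exists s; rewrite Ps /word_prod big_map.
have := nth_find 0%N has_word; rewrite has_find size_iota in has_word.
by rewrite nth_iota // add0n => /word_ofP.
Qed.

Lemma coxeter_length1 S : ell S 1 = 0%N.
Proof. by apply/eqP; rewrite -leqn0 (@coxeter_length_le S 1 [::]) ?word_prod_nil. Qed.

Lemma coxeter_length_gen S a : a \in S -> #[a] = 2%N -> ell S a = 1%N.
Proof.
move=> Sa a2; apply/eqP; rewrite eqn_leq (@coxeter_length_le S a [:: a]) /=; last first.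
- by rewrite word_prod_cons word_prod_nil mulg1.
- by rewrite Sa.
have [[|b s] [/= <- _ Pa]] := exists_reduced_word (mem_gen Sa) => //.
by move: a2; rewrite -Pa word_prod_nil order1.
Qed.

Lemma coxeter_lengthMr_le S x a : x \in <<S>> -> a \in S -> (ell S (x * a) <= (ell S x).+1)%N.
Proof.
case/exists_reduced_word=> s [<- Ss <-] Sa; rewrite -(size_rcons s a) coxeter_length_le //.
  by rewrite /word_over all_rcons Sa.
by rewrite word_prod_rcons.
Qed.

Definition involutions S : Prop := {in S, forall a, #[a] = 2%N}.

Lemma word_prod_rev S s : involutions S -> word_over S s -> word_prod (rev s) = (word_prod s)^-1.
Proof.
move=> invS; elim: s => [|a s IHs] /=; first by rewrite word_prod_nil invg1.
case/andP=> Sa Ss; rewrite rev_cons word_prod_rcons IHs // word_prod_cons invMg.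
by rewrite (invg2id (invS a Sa)).
Qed.

Lemma coxeter_lengthV S x : involutions S -> x \in <<S>> -> ell S x^-1 = ell S x.
Proof.
have le_ellV y : involutions S -> y \in <<S>> -> (ell S y^-1 <= ell S y)%N.
  move=> invS /exists_reduced_word[s [<- Ss Ps]]; rewrite -size_rev coxeter_length_le //.
    by rewrite /word_over all_rev.
  by rewrite (word_prod_rev invS) ?Ps.
move=> invS Sx; apply/eqP; rewrite eqn_leq le_ellV //=.
by rewrite -{1}[x]invgK le_ellV ?groupV.
Qed.

End Words.

Section ReflectionCocycle.
Variables (gT : finGroupType) (S : {set gT}).
Hypothesis invS : involutions S.
Implicit Types (x y a b r : gT) (s : seq gT).
Local Open Scope group_scope.

(* The reflection cocycle: a acts on pairs (t, e) by conjugation, flipping e when t = a.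
   Letting t range over all of gT avoids defining the set of reflections. *)
Definition refl_act a (z : gT * bool) : gT * bool := (z.1 ^ a^-1, z.2 (+) (z.1 == a)).

Fixpoint reflection_seq s : seq gT :=
  if s is a :: s' then a ^ word_prod s' :: reflection_seq s' else [::].

Lemma size_reflection_seq s : size (reflection_seq s) = size s.
Proof. by elim: s => //= a s ->. Qed.

Lemma conjVg_eq r x y : (r ^ x^-1 == y) = (r == y ^ x).
Proof. by apply/eqP/eqP=> [<- | ->]; rewrite ?conjgKV ?conjgK. Qed.

Lemma mulg_expgC a b k : b * (a * b) ^+ k = (b * a) ^+ k * b.
Proof.
elim: k => [|k IHk]; first by rewrite !expg0 mul1g mulg1.
by rewrite expgSr mulgA IHk -!mulgA expgSr -!mulgA.
Qed.

Lemma iter_refl_act a b k r c : a \in S -> b \in S ->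
  iter k (fun f z => refl_act a (refl_act b (f z))) id (r, c) =
  (r ^ ((a * b) ^+ k)^-1,
   c (+) odd (count_mem r [seq (b * a) ^+ i * b | i <- iota 0 k.*2])).
Proof.
move=> Sa Sb; have [Va Vb] := (invg2id (invS Sa), invg2id (invS Sb)).
have Vab : (a * b)^-1 = b * a by rewrite invMg Va Vb.
elim: k => [|k IHk]; first by rewrite /= expg0 invg1 conjg1 addbF.
have -> : iota 0 k.+1.*2 = iota 0 k.*2 ++ [:: k.*2; k.*2.+1].
  by rewrite doubleS -addn2 iotaD.
rewrite iterS [iter _ _ _ _]IHk /refl_act /= map_cat count_cat /=.
have -> : (r ^ ((a * b) ^+ k)^-1 == b) = ((b * a) ^+ k.*2 * b == r).
  by rewrite conjVg_eq eq_sym conjgE -expgVn Vab mulg_expgC mulgA -expgD addnn.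
have -> : ((r ^ ((a * b) ^+ k)^-1) ^ b^-1 == a) = ((b * a) ^+ k.*2.+1 * b == r).
  rewrite !conjVg_eq eq_sym !conjgE Vb -expgVn Vab (mulgA b a b) -(mulgA (b * a) b).
  by rewrite mulg_expgC mulgA -expgSr mulgA -expgD addSn addnn.
rewrite [(a * b) ^+ k.+1]expgS !invMg !conjgM addn0 !oddD !oddb.
by rewrite -!addbA.
Qed.

Lemma refl_act_braid a b : a \in S -> b \in S ->
  iter #[a * b] (fun f z => refl_act a (refl_act b (f z))) id = id.
Proof.
move=> Sa Sb; apply: functional_extensionality => -[r c].
rewrite iter_refl_act // (expg_order (a * b)) invg1 conjg1.
have ba_m : (b * a) ^+ #[a * b] = 1.
  rewrite -[b * a]invgK invMg (invg2id (invS Sa)) (invg2id (invS Sb)).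
  by rewrite expgVn expg_order invg1.
set m := #[a * b]; rewrite -addnn.
have -> : iota 0 (m + m) = iota 0 m ++ map (addn m) (iota 0 m).
  by rewrite iotaD -iotaDl add0n addn0.
rewrite map_cat -map_comp (eq_map (g := fun i => (b * a) ^+ i * b)); last first.
  by move=> i /=; rewrite expgD ba_m mul1g.
by rewrite count_cat oddD addbb addbF.
Qed.

Lemma mem_reflection_seq s r : r \in reflection_seq s ->
  exists L c R, s = L ++ c :: R /\ r = c ^ word_prod R.
Proof.
elim: s => //= a s IHs; rewrite inE => /orP[/eqP-> | /IHs[L [c [R [-> ->]]]]].
  by exists [::], a, s.
by exists (a :: L), c, R.
Qed.

Lemma deletion_condition s : word_over S s -> ~~ uniq (reflection_seq s) ->
  exists s', [/\ word_over S s', (size s').+2 = size s & word_prod s' = word_prod s].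
Proof.
elim: s => [|a s IHs] //= /andP[Sa Ss]; rewrite negb_and negbK => /orP[] rep_a; last first.
  have [s' [Ss' <- Ps']] := IHs Ss rep_a.
  by exists (a :: s'); rewrite /= Sa Ss' !word_prod_cons Ps'.
have [L [c [R [def_s]]]] := mem_reflection_seq rep_a; rewrite {rep_a}def_s in Ss *.
rewrite word_prod_cat word_prod_cons mulgA conjgM => /conjg_inj; rewrite conjgE => ac.
move: Ss; rewrite /word_over all_cat /= => /and3P[SL Sc SR].
have aLc : a * (word_prod L * c) = word_prod L.
  by rewrite -[LHS](mulKVg (word_prod L * c)) ac -mulgA -{1}(invg2id (invS Sc)) mulVg mulg1.
exists (L ++ R); split; first by rewrite /word_over all_cat SL SR.
  by rewrite !size_cat /= addnS.
by rewrite word_prod_cons !word_prod_cat word_prod_cons !mulgA -(mulgA a) aLc.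
Qed.

End ReflectionCocycle.

Section CoxeterSystem.
Variables (gT : finGroupType) (W : {group gT}) (S : {set gT}).
Hypothesis coxWS : coxeter_system W S.
Implicit Types (J : {set gT}) (x y a r : gT) (s : seq gT).
Local Open Scope group_scope.
Local Notation ell J := (coxeter_length J).

Lemma coxeter_gen : W :=: <<S>>. Proof. by case: coxWS. Qed.

Lemma coxeter_invol : involutions S. Proof. by case: coxWS. Qed.

Lemma parabolic_sub J : J \subset S -> <<J>> \subset W.
Proof. by move=> sJS; rewrite coxeter_gen genS. Qed.

Lemma coxeter_sign : exists2 eps : gT -> int,
  {in S, forall a, eps a = -1} & {in W &, {morph eps : x y / x * y >-> (x * y)%R}}.
Proof.
case: coxWS => _ _ /(_ int *%R 1%R (@mulrA _) (@mul1r _) (@mulr1 _) (fun=> -1%R)) [].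
  by move=> a b _ _; rewrite mulrNN mulr1; elim: #[a * b] => //= k ->; rewrite mulr1.
by move=> eps [eps_S eps_M]; exists eps.
Qed.

Lemma odd_coxeter_lengthMr J x a : J \subset S -> x \in <<J>> -> a \in J ->
  odd (ell J (x * a)) = ~~ odd (ell J x).
Proof.
move=> sJS Jx Ja; have [eps eps_S eps_M] := coxeter_sign.
have sJW := subsetP (parabolic_sub sJS).
have Sa := subsetP sJS a Ja.
have eps1 : eps 1 = 1%R.
  have := eps_M a 1 (sJW a (mem_gen Ja)) (group1 W).
  by rewrite mulg1 (eps_S a Sa) mulN1r => /eqP; rewrite eqr_opp => /eqP.
have eps_word s : word_over J s -> eps (word_prod s) = ((-1) ^+ size s)%R.
  elim: s => [|b s IHs] /=; first by rewrite word_prod_nil eps1.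
  case/andP=> Jb Js; have [Wb Ws] := (sJW _ (mem_gen Jb), sJW _ (word_prod_gen Js)).
  by rewrite word_prod_cons eps_M // IHs // (eps_S b (subsetP sJS b Jb)) exprS.
have eps_ell y : y \in <<J>> -> eps y = ((-1) ^+ ell J y)%R.
  by case/exists_reduced_word=> t [<- Jt <-]; apply: eps_word.
have Jxa : x * a \in <<J>> := groupM Jx (mem_gen Ja).
apply: (@signr_inj int); rewrite signrN !signr_odd -!eps_ell //.
by rewrite (eps_M x a (sJW x Jx) (sJW a (mem_gen Ja))) (eps_S a Sa) mulrN1.
Qed.

Lemma coxeter_lengthMr J x a : J \subset S -> x \in <<J>> -> a \in J ->
  ell J (x * a) = (ell J x).+1 \/ ell J x = (ell J (x * a)).+1.
Proof.
move=> sJS Jx Ja; have odd_xa := odd_coxeter_lengthMr sJS Jx Ja.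
have le_xa := coxeter_lengthMr_le Jx Ja.
have := coxeter_lengthMr_le (groupM Jx (mem_gen Ja)) Ja.
rewrite -mulgA -{2}(invg2id (coxeter_invol (subsetP sJS a Ja))) mulgV mulg1 => le_x.
have : ell J (x * a) != ell J x by apply/eqP=> eq_ell; move: odd_xa; rewrite eq_ell; case: odd.
lia.
Qed.

Lemma refl_rep : exists phi : gT -> gT * bool -> gT * bool,
  [/\ {in S, forall a, phi a = refl_act a}, phi 1 = id
    & {in W &, forall x y, phi (x * y) = phi x \o phi y}].
Proof.
have [S0 | [a0 Sa0]] := set_0Vmem S.
  by exists (fun=> id); split=> // a; rewrite S0 inE.
case: coxWS => _ _ /(_ (gT * bool -> gT * bool) (fun f g => f \o g) id).
case/(_ (fun _ _ _ => erefl) (fun _ => erefl) (fun _ => erefl) (@refl_act gT)).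
  exact: refl_act_braid coxeter_invol.
move=> phi [phi_S phi_M]; exists phi; split=> //.
have Wa0 : a0 \in W by rewrite coxeter_gen mem_gen.
have Va0 := invg2id (coxeter_invol Sa0).
rewrite -(mulVg a0) {1}Va0 phi_M // phi_S //.
apply: functional_extensionality => -[r c] /=; rewrite /refl_act /= conjVg_eq.
have a0a0 : a0 * a0 = 1 by rewrite -{1}Va0 mulVg.
by rewrite Va0 -conjgM a0a0 conjg1 [a0 ^ a0]conjgE mulKg -addbA addbb addbF.
Qed.

Section Inversions.
Variable phi : gT -> gT * bool -> gT * bool.
Hypotheses (phi_S : {in S, forall a, phi a = refl_act a}) (phi1 : phi 1 = id).
Hypothesis phiM : {in W &, forall x y, phi (x * y) = phi x \o phi y}.

Definition inversions x := [set r | (phi x (r, false)).2].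

Lemma refl_rep_word s r c : word_over S s ->
  phi (word_prod s) (r, c) = (r ^ (word_prod s)^-1, c (+) odd (count_mem r (reflection_seq s))).
Proof.
elim: s r c => [|a s IHs] r c /=; first by rewrite word_prod_nil phi1 invg1 conjg1 addbF.
case/andP=> Sa Ss; have Wa : a \in W by rewrite coxeter_gen mem_gen.
have Ws : word_prod s \in W by rewrite coxeter_gen word_prod_gen.
rewrite word_prod_cons phiM //= IHs // (phi_S Sa) /refl_act /= invMg conjgM conjVg_eq.
by rewrite oddD oddb [_ == r]eq_sym addbAC addbA.
Qed.

Lemma card_inversions_le s : word_over S s -> (#|inversions (word_prod s)| <= size s)%N.
Proof.
move=> Ss; rewrite -(size_reflection_seq s); apply: leq_trans (card_size _).
apply: subset_leq_card; apply/subsetP=> r; rewrite inE refl_rep_word //=.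
by apply: contraTT => /count_memPn->.
Qed.

Lemma card_inversions_uniq s : word_over S s -> uniq (reflection_seq s) ->
  #|inversions (word_prod s)| = size s.
Proof.
move=> Ss uniq_s; rewrite -(size_reflection_seq s) -(card_uniqP uniq_s).
apply: eq_card => r; rewrite inE refl_rep_word //= count_uniq_mem //.
by case: (r \in _).
Qed.

End Inversions.

(* A reduced J-word has no repeated reflection (deletion condition), so it inverts as many
   elements as its length, while any S-word for the same element inverts at most its length. *)
Lemma coxeter_length_parabolic J x : J \subset S -> x \in <<J>> -> ell S x = ell J x.
Proof.
move=> sJS Jx; have [sJ [ell_sJ JsJ PsJ]] := exists_reduced_word Jx.
have sub_word s : word_over J s -> word_over S s.
  by apply: sub_all => a; apply: (subsetP sJS).
apply/eqP; rewrite eqn_leq -{1}ell_sJ coxeter_length_le ?sub_word //=.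
have [sS [ell_sS SsS PsS]] := exists_reduced_word (subsetP (genS sJS) x Jx).
have uniq_sJ : uniq (reflection_seq sJ).
  apply: contraT => /(deletion_condition (fun a Ja => coxeter_invol (subsetP sJS a Ja)) JsJ).
  case=> s' [Js' size_s' Ps']; have := coxeter_length_le Js' (etrans Ps' PsJ).
  by rewrite -ell_sJ -size_s'; lia.
have [phi [phi_S phi1 phiM]] := refl_rep.
rewrite -ell_sJ -(card_inversions_uniq phi_S phi1 phiM (sub_word _ JsJ)) // -ell_sS PsJ -PsS.
exact: card_inversions_le.
Qed.

End CoxeterSystem.

Section MatrixFacts.
Variable F : fieldType.

Lemma quadratic_intertwine r m (A : 'M[F]_r) (B : 'M[F]_m) (M : 'M[F]_(r, m)) (q u v : F) :
  A *m A = q *: 1%:M + (q - 1) *: A -> B *m B = q *: 1%:M + (q - 1) *: B -> v * q = u ->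
  A *m (u *: M + v *: (A *m M *m B)) = (u *: M + v *: (A *m M *m B)) *m B.
Proof.
move=> quadA quadB vq; rewrite mulmxDr mulmxDl -!scalemxAr -!scalemxAl !mulmxA quadA.
rewrite -[A *m M *m B *m B]mulmxA quadB.
rewrite !(mulmxDl, mulmxDr) -!scalemxAl -!scalemxAr !mul1mx !mulmx1 !scalerDr !scalerA vq.
by rewrite ?mulmxA addrCA.
Qed.

Lemma mulmx_delta_mxE p r m k (A : 'M[F]_(p, r)) (B : 'M[F]_(m, k)) i j u l :
  (A *m delta_mx i j *m B) u l = A u i * B j l.
Proof.
rewrite -(mul_delta_mx (0 : 'I_1)) mulmxA -colE -mulmxA -rowE.
by rewrite mxE big_ord1 !mxE.
Qed.

Section SubFactorModule.
Variables (n : nat) (U : 'M[F]_n).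

Lemma in_submod_mulmx m (V : 'M[F]_(m, n)) (B : 'M[F]_n) : (V <= U)%MS ->
  in_submod U (V *m B) = in_submod U V *m in_submod U (val_submod 1%:M *m B).
Proof.
by move=> sVU; rewrite mulmxA; congr (in_submod U _); rewrite mulmxA -val_submodE in_submodK.
Qed.

Lemma in_factmod_mulmx m (V : 'M[F]_(m, n)) (B : 'M[F]_n) : (U *m B <= U)%MS ->
  in_factmod U (V *m B) = in_factmod U V *m in_factmod U (val_factmod 1%:M *m B).
Proof.
move=> UB_U; rewrite -{1}[V](add_sub_fact_mod U) mulmxDl linearD /=.
apply: (canLR (subrK _)); apply: etrans (_ : 0 = _).
  by apply/eqP; rewrite in_factmod_eq0 (submx_trans _ UB_U) // submxMr ?val_submodP.
by rewrite /in_factmod /val_factmod /= !mulmxA mulmx1 subrr.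
Qed.

Lemma mxtrace_sub_fact_mulmx (B : 'M[F]_n) :
  \tr (in_submod U (val_submod 1%:M *m B)) + \tr (in_factmod U (val_factmod 1%:M *m B)) = \tr B.
Proof.
rewrite -[in_submod U _]mulmxA mxtrace_mulC -val_submodE addrC.
rewrite -[in_factmod U _]mulmxA mxtrace_mulC -val_factmodE addrC.
by rewrite -mxtraceD add_sub_fact_mod.
Qed.

End SubFactorModule.

Section Irreducible.
Variables (gT : finGroupType) (G : {set gT}).

Definition mx_irreducible_on n (rho : gT -> 'M[F]_n) : Prop :=
  forall U : 'M_n, {in G, forall w, (U *m rho w <= U)%MS} -> (U == (0 : 'M_n))%MS || row_full U.

Lemma mx_irreducible_intertwine_mxtrace r m (rho : gT -> 'M[F]_r) (sigma : gT -> 'M[F]_m)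
    (M : 'M[F]_(r, m)) :
  mx_irreducible_on rho -> mx_irreducible_on sigma ->
  {in G, forall y, rho y *m M = M *m sigma y} -> M != 0 ->
  {in G, forall y, \tr (sigma y) = \tr (rho y)}.
Proof.
move=> irr_rho irr_sigma rhoM_Msigma nzM.
have freeM : row_free M.
  rewrite -kermx_eq0; have [y Gy | /andP[] | fullK] := orP (irr_rho (kermx M) _).
  - by apply/sub_kermxP; rewrite -mulmxA rhoM_Msigma // mulmxA mulmx_ker mul0mx.
  - by rewrite submx0.
  by case/eqP: nzM; have /sub_kermxP := submx_full 1%:M fullK; rewrite mul1mx.
have fullM : row_full M.
  rewrite /row_full -genmxE; have [y Gy | /andP[] | //] := orP (irr_sigma <<M>>%MS _).
  - by rewrite (eqmxMr _ (genmxE M)) genmxE -rhoM_Msigma // submxMl.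
  by rewrite genmxE submx0 (negPf nzM).
move=> y Gy; have MMi : M *m pinvmx M = 1%:M by apply: mulmxVp.
have MiM : pinvmx M *m M = 1%:M by have := mulmxKpV (submx_full 1%:M fullM); rewrite mul1mx.
by rewrite -[sigma y]mul1mx -MiM -mulmxA -rhoM_Msigma // mxtrace_mulC -mulmxA MMi mulmx1.
Qed.

End Irreducible.

End MatrixFacts.

(** * Representations of Hecke algebras *)

Lemma qF_neq0 : qF != 0.
Proof. by rewrite tofrac_eq0 expf_neq0 // polyX_eq0. Qed.

Lemma poincare_neq0 (gT : finGroupType) (G : {group gT}) (S : {set gT}) : poincare G S != 0.
Proof.
rewrite /poincare (eq_bigr (fun w => tofrac ('X ^+ 2 ^+ coxeter_length S w))); last first.
  by move=> w _; rewrite rmorphXn.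
rewrite -rmorph_sum tofrac_eq0; apply/eqP=> /(congr1 (horner^~ 1)).
rewrite horner0 horner_sum (eq_bigr (fun=> 1)) => [|w _]; last by rewrite !hornerE !expr1n.
by rewrite sumr_const => /eqP; rewrite pnatr_eq0 eqn0Ngt cardG_gt0.
Qed.

Section HeckeRepresentations.
Variables (gT : finGroupType) (S : {set gT}).
Hypothesis invS : involutions S.
Local Notation W := <<S>>%G.
Local Notation ell := (coxeter_length S).
Hypothesis ellMr : forall x a, x \in W -> a \in S ->
  ell (x * a)%g = (ell x).+1 \/ ell x = (ell (x * a)%g).+1.
Implicit Types (x y a : gT).

Lemma exists_descent x : x \in W -> x != 1%g -> exists2 a, a \in S & ell x = (ell (x * a)%g).+1.
Proof.
move=> Wx; have [s [ell_x]] := exists_reduced_word Wx; case/lastP: s ell_x => [|s a] ell_x.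
  by move=> _ <-; rewrite word_prod_nil eqxx.
rewrite /word_over all_rcons => /andP[Sa Ss] Px _; exists a => //.
have : (ell (x * a)%g <= size s)%N.
  apply: coxeter_length_le Ss _.
  by rewrite -Px word_prod_rcons -mulgA -{2}(invg2id (invS Sa)) mulgV mulg1.
by case: (ellMr Wx Sa) => // ->; rewrite -ell_x size_rcons; lia.
Qed.

Section Rep.
Variables (n : nat) (rho : gT -> 'M[HF]_n).
Hypothesis rho_rep : hecke_rep W S rho.

Lemma hecke_rep1 : rho 1%g = 1%:M.
Proof. by case: rho_rep. Qed.

Lemma hecke_rep_quadratic a : a \in S -> rho a *m rho a = qF *: 1%:M + (qF - 1) *: rho a.
Proof. by case: rho_rep => _ quad _; apply: quad. Qed.

Lemma hecke_repMr x a : x \in W -> a \in S -> ell (x * a)%g = (ell x).+1 ->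
  rho (x * a)%g = rho x *m rho a.
Proof.
move=> Wx Sa ell_xa; case: rho_rep => _ _ rhoM; apply: rhoM => //; first exact: mem_gen.
by rewrite (coxeter_length_gen Sa (invS Sa)) addn1.
Qed.

Lemma hecke_repMl x a : x \in W -> a \in S -> ell (a * x)%g = (ell x).+1 ->
  rho (a * x)%g = rho a *m rho x.
Proof.
move=> Wx Sa ell_ax; case: rho_rep => _ _ rhoM; apply: rhoM => //; first exact: mem_gen.
by rewrite (coxeter_length_gen Sa (invS Sa)) add1n.
Qed.

End Rep.

(* The Hecke analogue of averaging M over W: at q = 1 it is the sum of rho(x^-1) M sigma(x). *)
Definition hecke_avg r m (rho : gT -> 'M[HF]_r) (sigma : gT -> 'M[HF]_m) (M : 'M[HF]_(r, m)) :=
  \sum_(x in W) (qF ^+ ell x)^-1 *: (rho (x^-1)%g *m M *m sigma x).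

Section Intertwine.
Variables (r m : nat) (rho : gT -> 'M[HF]_r) (sigma : gT -> 'M[HF]_m).
Hypotheses (rho_rep : hecke_rep W S rho) (sigma_rep : hecke_rep W S sigma).

(* Pair the terms of x and x a with ell (x a) = ell x + 1: each pair intertwines by the
   quadratic relation. *)
Lemma hecke_avg_gen M a : a \in S ->
  rho a *m hecke_avg rho sigma M = hecke_avg rho sigma M *m sigma a.
Proof.
move=> Sa; have Wa : a \in W := mem_gen Sa; have Va := invg2id (invS Sa).
pose up x := ell (x * a)%g == (ell x).+1.
pose F x := (qF ^+ ell x)^-1 *: (rho (x^-1)%g *m M *m sigma x).
rewrite /hecke_avg -/F (bigID up) /=.
have -> : \sum_(x in W | ~~ up x) F x = \sum_(x in W | up x) F (x * a)%g.
  rewrite (reindex_inj (mulIg a)) /=; apply: eq_bigl => x; rewrite groupMr //.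
  case Wx: (x \in W) => //=; rewrite /up -mulgA -{2}Va mulgV mulg1.
  by case: (ellMr Wx Sa) => ->; rewrite eqxx // -addn2 -{1}[ell _]addn0 eqn_add2l.
rewrite -big_split mulmx_sumr mulmx_suml; apply: eq_bigr => x /andP[Wx /eqP up_x].
have Wx' : (x^-1)%g \in W by rewrite groupV.
have rho_xa : rho ((x * a)^-1)%g = rho a *m rho (x^-1)%g.
  rewrite invMg Va hecke_repMl // -Va -invMg !coxeter_lengthV ?groupM //.
rewrite /F rho_xa hecke_repMr // up_x.
have -> : rho a *m rho (x^-1)%g *m M *m (sigma x *m sigma a) =
          rho a *m (rho (x^-1)%g *m M *m sigma x) *m sigma a by rewrite !mulmxA.
apply: quadratic_intertwine; rewrite ?hecke_rep_quadratic //.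
by rewrite exprS invfM mulrAC mulVf ?mul1r ?qF_neq0.
Qed.

Lemma hecke_avg_intertwine M :
  {in W, forall y, rho y *m hecke_avg rho sigma M = hecke_avg rho sigma M *m sigma y}.
Proof.
move=> y; have [k] := ubnP (ell y); elim: k y => // k IHk y lt_y_k Wy.
have [-> | y1] := eqVneq y 1%g; first by rewrite !hecke_rep1 // mul1mx mulmx1.
have [a Sa ell_y] := exists_descent Wy y1.
have Wya : (y * a)%g \in W := groupM Wy (mem_gen Sa).
have def_y : y = (y * a * a)%g by rewrite -mulgA -{2}(invg2id (invS Sa)) mulgV mulg1.
have ell_yaa : ell (y * a * a)%g = (ell (y * a)%g).+1 by rewrite -def_y.
rewrite def_y (hecke_repMr rho_rep) // (hecke_repMr sigma_rep) //.
by rewrite -mulmxA hecke_avg_gen // !mulmxA IHk // -ltnS -ell_y.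
Qed.

End Intertwine.

Section SubFactorRep.
Variables (n : nat) (rho : gT -> 'M[HF]_n) (U : 'M[HF]_n).
Hypotheses (rho_rep : hecke_rep W S rho) (U_stable : {in W, forall y, (U *m rho y <= U)%MS}).

Definition hecke_subrep y := in_submod U (@val_submod _ _ U _ 1%:M *m rho y).
Definition hecke_factrep y := in_factmod U (@val_factmod _ _ U _ 1%:M *m rho y).

Lemma hecke_subrepM y z : y \in W ->
  hecke_subrep y *m hecke_subrep z = in_submod U (val_submod 1%:M *m (rho y *m rho z)).
Proof.
move=> Wy; rewrite mulmxA in_submod_mulmx //.
exact: submx_trans (submxMr _ (val_submodP _)) (U_stable Wy).
Qed.

Lemma hecke_factrepM y z : z \in W ->
  hecke_factrep y *m hecke_factrep z = in_factmod U (val_factmod 1%:M *m (rho y *m rho z)).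
Proof. by move=> Wz; rewrite mulmxA in_factmod_mulmx ?U_stable. Qed.

Lemma hecke_subrep_rep : hecke_rep W S hecke_subrep.
Proof.
case: rho_rep => rho1 quad rhoM; split.
- by rewrite /hecke_subrep rho1 mulmx1 val_submodK.
- move=> a Sa; rewrite hecke_subrepM ?mem_gen // quad // mulmxDr -!scalemxAr mulmx1.
  by rewrite linearD !linearZ /= val_submodK.
by move=> x y Wx Wy ell_xy; rewrite hecke_subrepM // /hecke_subrep rhoM.
Qed.

Lemma hecke_factrep_rep : hecke_rep W S hecke_factrep.
Proof.
case: rho_rep => rho1 quad rhoM; split.
- by rewrite /hecke_factrep rho1 mulmx1 val_factmodK.
- move=> a Sa; rewrite hecke_factrepM ?mem_gen // quad // mulmxDr -!scalemxAr mulmx1.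
  by rewrite linearD !linearZ /= val_factmodK.
by move=> x y Wx Wy ell_xy; rewrite hecke_factrepM // /hecke_factrep rhoM.
Qed.

End SubFactorRep.

Definition hecke_trace_avg r m (rho : gT -> 'M[HF]_r) (sigma : gT -> 'M[HF]_m) : 'M[HF]_m :=
  \sum_(x in W) (qF ^+ ell x)^-1 *: (\tr (rho (x^-1)%g) *: sigma x).

Lemma hecke_trace_avgE r m (rho : gT -> 'M[HF]_r) (sigma : gT -> 'M[HF]_m) k l :
  hecke_trace_avg rho sigma k l = \sum_i hecke_avg rho sigma (delta_mx i k) i l.
Proof.
rewrite /hecke_trace_avg /hecke_avg summxE.
under [RHS]eq_bigr do rewrite summxE.
rewrite exchange_big /=; apply: eq_bigr => x _.
rewrite !mxE /mxtrace mulr_suml mulr_sumr; apply: eq_bigr => i _.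
by rewrite mxE mulmx_delta_mxE mulrA.
Qed.

Section Family.
Variables (rk : Iirr W -> nat) (rhoS : forall j, gT -> 'M[HF]_(rk j)) (d : Iirr W -> HF).
Hypotheses (rhoS_irr : forall j, hecke_irr W S (rhoS j)) (d_gdeg : is_generic_degrees W S rhoS d).

Lemma generic_degrees_trace_avg m (sigma : gT -> 'M[HF]_m) : hecke_rep W S sigma ->
  \sum_j d j *: hecke_trace_avg (rhoS j) sigma = poincare W S *: 1%:M.
Proof.
move=> sigma_rep; under eq_bigr do rewrite scaler_sumr.
rewrite exchange_big (bigD1 1%g) ?group1 //= [X in _ + X]big1 ?addr0 => [|x /andP[Wx x1]].
  rewrite invg1 coxeter_length1 expr0 invr1 hecke_rep1 //.
  under eq_bigr do rewrite scale1r scalerA mulrC.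
  by rewrite -scaler_suml (d_gdeg (group1 W)) eqxx.
under eq_bigr do rewrite !scalerA mulrAC mulrC.
rewrite -scaler_suml -mulr_sumr.
under eq_bigr do rewrite mulrC.
by rewrite d_gdeg ?groupV // invg_eq1 (negPf x1) mulr0 scale0r.
Qed.

(* Otherwise all averaged intertwiners vanish by Schur's lemma, and weighting their traces
   by the generic degrees would give P_W * 1 = 0. *)
Lemma hecke_irr_mxtrace_family m (sigma : gT -> 'M[HF]_m) : hecke_irr W S sigma ->
  exists j, {in W, forall y, \tr (sigma y) = \tr (rhoS j y)}.
Proof.
move=> [sigma_rep m_gt0 sigma_irr].
pose same_tr j := [forall y in W, \tr (sigma y) == \tr (rhoS j y)].
have [j /forall_inP eq_tr | no_j] := pickP same_tr; first by exists j => y /eq_tr/eqP.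
have avg0 j M : hecke_avg (rhoS j) sigma M = 0.
  apply: contraFeq (no_j j) => nzM; apply/forall_inP => y Wy; apply/eqP.
  have [rho_rep _ rho_irr] := rhoS_irr j.
  apply: mx_irreducible_intertwine_mxtrace rho_irr sigma_irr _ nzM _ Wy.
  exact: hecke_avg_intertwine.
have : poincare W S *: (1%:M : 'M[HF]_m) = 0.
  rewrite -(generic_degrees_trace_avg sigma_rep) big1 // => j _.
  suff -> : hecke_trace_avg (rhoS j) sigma = 0 by rewrite scaler0.
  by apply/matrixP=> k l; rewrite hecke_trace_avgE mxE big1 // => i _; rewrite avg0 mxE.
move/matrixP/(_ (Ordinal m_gt0) (Ordinal m_gt0)); rewrite !mxE eqxx mulr1 => /eqP.
by rewrite (negPf (poincare_neq0 _ _)).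
Qed.

Lemma hecke_rep_mxtrace_decomposition n (rho : gT -> 'M[HF]_n) : hecke_rep W S rho ->
  exists mu : Iirr W -> nat, {in W, forall y, \tr (rho y) = \sum_j (mu j)%:R * \tr (rhoS j y)}.
Proof.
have [N] := ubnP n; elim: N n rho => // N IHN n rho lt_n_N rho_rep.
have [rho_irr | rho_red] := classic (mx_irreducible_on W rho).
  have [n0 | n_gt0] := posnP n.
    exists (fun=> 0%N) => y _; rewrite big1 => [|j _]; last by rewrite mul0r.
    rewrite /mxtrace big1 // => i; have n_gt0 := leq_ltn_trans (leq0n i) (ltn_ord i).
    by rewrite n0 in n_gt0.
  have [j0 eq_tr] := hecke_irr_mxtrace_family (And3 rho_rep n_gt0 rho_irr).
  exists (fun j => nat_of_bool (j == j0)) => y Wy; rewrite (bigD1 j0) //= eqxx mul1r.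
  by rewrite big1 ?addr0 ?eq_tr // => j /negPf->; rewrite mul0r.
have [U [U_stable nzU nfullU]] : exists U : 'M_n,
    [/\ {in W, forall y, (U *m rho y <= U)%MS}, ~~ (U == (0 : 'M_n))%MS & ~~ row_full U].
  apply: NNPP => noU; apply: rho_red => U U_stable.
  by apply/negPn/negP=> /norP[nzU nfullU]; apply: noU; exists U.
have rankU_gt0 : (0 < \rank U)%N.
  by move: nzU; rewrite lt0n mxrank_eq0 -submx0 sub0mx andbT.
have rankU_lt : (\rank U < n)%N by rewrite ltn_neqAle nfullU rank_leq_col.
have [|mu1 tr_sub] := IHN _ _ _ (hecke_subrep_rep rho_rep U_stable); first lia.
have [|mu2 tr_fact] := IHN _ _ _ (hecke_factrep_rep rho_rep U_stable).
  by rewrite mxrank_coker; lia.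
exists (fun j => mu1 j + mu2 j)%N => y Wy.
rewrite -(mxtrace_sub_fact_mulmx U) -/(hecke_subrep rho U y) -/(hecke_factrep rho U y).
rewrite tr_sub // tr_fact // -big_split; apply: eq_bigr => j _.
by rewrite natrD mulrDl.
Qed.

End Family.

End HeckeRepresentations.

(** * Restriction to a parabolic subalgebra *)

(* The traces specialize at sqrt q = 1 to the rows of the character table, which is
   invertible. *)
Lemma hecke_affords_mxtrace_free (gT : finGroupType) (G : {group gT}) (rk : Iirr G -> nat)
    (rho : forall j, gT -> 'M[HF]_(rk j)) (c : Iirr G -> HF) :
  (forall j, hecke_affords G (rho j) 'chi[G]_j) ->
  {in G, forall x, \sum_j c j * \tr (rho j x) = 0} -> forall j, c j = 0.
Proof.
move=> rho_aff c_rel.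
have exP j x : exists p : {poly algC},
    (x \in G) ==> (\tr (rho j x) == tofrac p) && (p.[1] == 'chi_j x).
  case Gx: (x \in G); last by exists 0.
  by have [p [-> <-]] := rho_aff j x Gx; exists p; rewrite !eqxx.
pose P j x := xchoose (exP j x).
have P_spec j x : x \in G -> \tr (rho j x) = tofrac (P j x) /\ (P j x).[1] = 'chi_j x.
  by move=> Gx; have /implyP/(_ Gx)/andP[/eqP ? /eqP ?] := xchooseP (exP j x).
have G_repr (k : Iirr G) : repr (irr_class k) \in G by have /repr_classesP[] := irr_classP k.
pose tbl : 'M[{poly algC}]_(Nirr G) := \matrix_(i, k) P i (repr (irr_class k)).
have tbl1 : map_mx (horner_eval 1) tbl = character_table G.
  by apply/matrixP=> i k; rewrite !mxE horner_evalE (proj2 (P_spec _ _ (G_repr k))).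
have tbl_unit : map_mx (@tofrac _) tbl \in unitmx.
  rewrite unitmxE det_map_mx unitfE tofrac_eq0.
  have := character_table_unit G; rewrite unitmxE -tbl1 det_map_mx unitfE.
  by apply: contraNneq => ->; rewrite rmorph0.
have c_tbl : \row_i c i *m map_mx (@tofrac _) tbl = 0.
  apply/matrixP=> i k; rewrite !mxE -[RHS](c_rel _ (G_repr k)); apply: eq_bigr => j _.
  by rewrite !mxE (proj1 (P_spec _ _ (G_repr k))).
move=> j; have := mulmxK tbl_unit (\row_i c i); rewrite c_tbl mul0mx => /matrixP/(_ 0 j).
by rewrite !mxE.
Qed.

Section ParabolicRestriction.
Variables (gT : finGroupType) (W : {group gT}) (S J : {set gT}).
Hypotheses (coxWS : coxeter_system W S) (sJS : J \subset S).
Local Notation WJ := <<J>>%G.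
Variables (rk : Iirr W -> nat) (rho : forall i, gT -> 'M[HF]_(rk i)).
Hypothesis rho_irr : forall i, hecke_irr W S (rho i) /\ hecke_affords W (rho i) 'chi[W]_i.
Variables (d : Iirr W -> HF) (rkJ : Iirr WJ -> nat) (rhoJ : forall j, gT -> 'M[HF]_(rkJ j)).
Hypothesis rhoJ_irr : forall j, hecke_irr WJ J (rhoJ j) /\ hecke_affords WJ (rhoJ j) 'chi[WJ]_j.
Variable dJ : Iirr WJ -> HF.
Hypotheses (d_gdeg : is_generic_degrees W S rho d) (dJ_gdeg : is_generic_degrees WJ J rhoJ dJ).

Lemma hecke_rep_parabolic n (sigma : gT -> 'M[HF]_n) :
  hecke_rep W S sigma -> hecke_rep WJ J sigma.
Proof.
case=> sigma1 quad sigmaM; split=> // [a Ja | x y Jx Jy ell_xy].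
  exact: quad (subsetP sJS a Ja).
have sJW := subsetP (parabolic_sub coxWS sJS).
apply: sigmaM; rewrite ?sJW //.
by rewrite !(coxeter_length_parabolic coxWS sJS) ?groupM.
Qed.

Lemma hecke_restriction_multiplicities : exists mu : Iirr W -> Iirr WJ -> nat,
  forall i, {in WJ, forall y, \tr (rho i y) = \sum_j (mu i j)%:R * \tr (rhoJ j y)}.
Proof.
have /fin_all_exists[mu tr_mu] i : exists mu : Iirr WJ -> nat,
    {in WJ, forall y, \tr (rho i y) = \sum_j (mu j)%:R * \tr (rhoJ j y)}.
  apply: (hecke_rep_mxtrace_decomposition _ _ _ dJ_gdeg).
  - by move=> a Ja; apply: (coxeter_invol coxWS (subsetP sJS a Ja)).
  - by move=> x a; apply: (coxeter_lengthMr coxWS sJS).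
  - by move=> j; case: (rhoJ_irr j).
  by apply: hecke_rep_parabolic; case: (rho_irr i) => -[].
by exists mu.
Qed.

Section Multiplicities.
Variable mu : Iirr W -> Iirr WJ -> nat.
Hypothesis tr_mu :
  forall i, {in WJ, forall y, \tr (rho i y) = \sum_j (mu i j)%:R * \tr (rhoJ j y)}.

Lemma irr_parabolic_restriction i :
  {in WJ, forall y, 'chi[W]_i y = \sum_j (mu i j)%:R * 'chi[WJ]_j y}.
Proof.
move=> y Jy; have Wy := subsetP (parabolic_sub coxWS sJS) y Jy.
have [p [tr_p <-]] := (proj2 (rho_irr i)) y Wy.
have /fin_all_exists[pJ pJ_spec] j : exists pJ : {poly algC},
    \tr (rhoJ j y) = tofrac pJ /\ pJ.[1] = 'chi[WJ]_j y.
  exact: (proj2 (rhoJ_irr j)).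
have -> : p = \sum_j (mu i j)%:R * pJ j.
  apply/eqP; rewrite -tofrac_eq -tr_p tr_mu // rmorph_sum; apply/eqP/eq_bigr => j _.
  by rewrite rmorphM rmorph_nat (proj1 (pJ_spec j)).
rewrite horner_sum; apply: eq_bigr => j _.
by rewrite hornerM (proj2 (pJ_spec j)) hornerMn hornerC.
Qed.

Lemma generic_degree_parabolic j :
  \sum_i (mu i j)%:R * d i = poincare W S / poincare WJ J * dJ j.
Proof.
apply/eqP; rewrite -subr_eq0; apply/eqP; move: j.
apply: (hecke_affords_mxtrace_free (fun j => proj2 (rhoJ_irr j))) => y Jy.
have Wy := subsetP (parabolic_sub coxWS sJS) y Jy.
rewrite (eq_bigr _ (fun j _ => mulrBl _ _ _)) sumrB.
have -> : \sum_j (\sum_i (mu i j)%:R * d i) * \tr (rhoJ j y) = \sum_i \tr (rho i y) * d i.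
  under eq_bigr do rewrite mulr_suml.
  rewrite exchange_big /=; apply: eq_bigr => i _.
  by rewrite tr_mu // mulr_suml; apply: eq_bigr => j _; rewrite mulrAC.
rewrite d_gdeg // (eq_bigr (fun j => poincare W S / poincare WJ J * (\tr (rhoJ j y) * dJ j))).
  rewrite -mulr_sumr dJ_gdeg //.
  by case: eqP; rewrite ?mulr0 ?subrr // divfK ?poincare_neq0 // subrr.
by move=> j _; rewrite -!mulrA (mulrC (dJ j)).
Qed.

End Multiplicities.

Lemma gpoly_parabolic x : x \in WJ ->
  gpoly W d x = poincare W S / poincare WJ J * gpoly WJ dJ x.
Proof.
move=> Jx; have [mu tr_mu] := hecke_restriction_multiplicities.
rewrite /gpoly /cstF.
under eq_bigr do rewrite (irr_parabolic_restriction tr_mu) // !rmorph_sum mulr_suml.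
rewrite exchange_big mulr_sumr; apply: eq_bigr => j _.
under eq_bigr do rewrite !rmorphM !rmorph_nat mulrAC mulrC.
by rewrite -mulr_sumr generic_degree_parabolic // mulrCA.
Qed.

End ParabolicRestriction.

Lemma gpoly_conjg (gT : finGroupType) (G : {group gT}) (d : Iirr G -> HF) x g :
  g \in G -> gpoly G d (x ^ g)%g = gpoly G d x.
Proof. by move=> Gg; apply: eq_bigr => i _; rewrite cfunJ. Qed.

Theorem proposition2p3 (gT : finGroupType) (W : {group gT}) (S J : {set gT})
  (HW : coxeter_system W S) (HJS : J \subset S)
  (rk : Iirr W -> nat) (rho : forall i : Iirr W, gT -> 'M[HF]_(rk i))
  (Hrho : forall i, hecke_irr W S (rho i) /\ hecke_affords W (rho i) 'chi[W]_i)
  (d : Iirr W -> HF) (Hd : is_generic_degrees W S rho d)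
  (rkJ : Iirr <<J>>%G -> nat) (rhoJ : forall j : Iirr <<J>>%G, gT -> 'M[HF]_(rkJ j))
  (HrhoJ : forall j, hecke_irr <<J>>%G J (rhoJ j) /\
                     hecke_affords <<J>>%G (rhoJ j) 'chi[<<J>>%G]_j)
  (dJ : Iirr <<J>>%G -> HF) (HdJ : is_generic_degrees <<J>>%G J rhoJ dJ)
  (w x : gT) (Hw : w \in W) (Hx : x \in <<J>>%G) (Hwx : w \in (x ^: W)%g) :
  gpoly W d w = poincare W S / poincare <<J>>%G J * gpoly <<J>>%G dJ x.
Proof.
have [g Wg ->] := imsetP Hwx.
by rewrite gpoly_conjg // (gpoly_parabolic HW HJS Hrho HrhoJ Hd HdJ).
Qed.
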